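(* Let $V$ be an $n$-dimensional left vector space over a division ring $R$ ($4\le n<\infty$), and let $n,k,l,m$ satisfy $l\ge 4$, $1<k<n-1$, $1<m<l-1$ and $\min\{m,l-m\}\le\min\{k,n-k\}$. Let $\mathcal J$ be the image of an isometric embedding of the Johnson graph $J(l,m)$ in the Grassmann graph $\Gamma_k(V)$, and let $\Gamma(\mathcal J)$ be the restriction (induced subgraph) of $\Gamma_k(V)$ to $\mathcal J$. Then every maximal clique of $\Gamma(\mathcal J)$ is contained in precisely one maximal clique of $\Gamma_k(V)$.
   Context: $\mathcal G_k(V)$ is the set of $k$-dimensional subspaces of $V$. The Grassmann graph $\Gamma_k(V)$ has vertex set $\mathcal G_k(V)$, two vertices being adjacent if their intersection is $(k-1)$-dimensional. The Johnson graph $J(l,m)$ has as vertices the $m$-element subsets of an $l$-element set, two being adjacent if they meet in $m-1$ elements. An isometric embedding is an injective map of vertex sets preserving graph distance. *)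

From mathcomp Require Import all_boot all_order all_algebra.
Set Implicit Arguments. Unset Strict Implicit. Unset Printing Implicit Defensive.
Import GRing.Theory.
Local Open Scope ring_scope.

Definition division_ring (R : unitRingType) : Prop :=
  forall x : R, x != 0 -> x \is a GRing.unit.

(** The n-dimensional left vector space R^n (row vectors, left scalar action a *: v). *)
Notation vecsp R n := 'rV[R]_n.

Definition lin_free (R : unitRingType) (n d : nat) (b : 'I_d -> vecsp R n) : Prop :=
  forall c : 'I_d -> R, \sum_(i < d) c i *: b i = 0 -> forall i, c i = 0.

Definition is_subspace_dim (R : unitRingType) (n d : nat) (X : vecsp R n -> Prop) : Prop :=
  exists b : 'I_d -> vecsp R n, lin_free b /\
    forall v, X v <-> exists c : 'I_d -> R, v = \sum_(i < d) c i *: b i.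

Definition grass_vertex (R : unitRingType) (n k : nat) (X : vecsp R n -> Prop) : Prop :=
  is_subspace_dim k X.

Definition grass_adj (R : unitRingType) (n k : nat) (X Y : vecsp R n -> Prop) : Prop :=
  grass_vertex k X /\ grass_vertex k Y /\
  is_subspace_dim k.-1 (fun v => X v /\ Y v).

Definition johnson_vertex (l m : nat) (A : {set 'I_l}) : Prop := #|A| = m.
Definition johnson_adj (l m : nat) (A B : {set 'I_l}) : Prop :=
  johnson_vertex m A /\ johnson_vertex m B /\ #|A :&: B| = m.-1.

Fixpoint walk (T : Type) (adj : T -> T -> Prop) (d : nat) (x y : T) : Prop :=
  match d with
  | 0 => x = y
  | d'.+1 => exists z, adj x z /\ walk adj d' z y
  end.

Definition gdist (T : Type) (adj : T -> T -> Prop) (x y : T) (d : nat) : Prop :=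
  walk adj d x y /\ forall d', walk adj d' x y -> (d <= d')%N.

Definition isometric_embedding (R : unitRingType) (n k l m : nat)
    (f : {set 'I_l} -> (vecsp R n -> Prop)) : Prop :=
  (forall A, johnson_vertex m A -> grass_vertex k (f A)) /\
  (forall A B, johnson_vertex m A -> johnson_vertex m B -> f A = f B -> A = B) /\
  (forall A B d, johnson_vertex m A -> johnson_vertex m B ->
     (gdist (@johnson_adj l m) A B d <-> gdist (@grass_adj R n k) (f A) (f B) d)).

Definition is_clique (T : Type) (P : T -> Prop) (adj : T -> T -> Prop) (C : T -> Prop) : Prop :=
  (forall x, C x -> P x) /\ (forall x y, C x -> C y -> x <> y -> adj x y).

Definition is_maximal_clique (T : Type) (P : T -> Prop) (adj : T -> T -> Prop)
    (C : T -> Prop) : Prop :=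
  is_clique P adj C /\
  forall D, is_clique P adj D -> (forall x, C x -> D x) -> forall x, D x -> C x.

(* Maximal cliques of a Grassmann graph are the stars (k-spaces through a fixed
   (k-1)-space S) and the tops (k-spaces inside a fixed (k+1)-space T).  A
   triangle X, Y, W lies in both kinds exactly when X /\ Y <= W <= X + Y, and
   then every common neighbour of X and Y is adjacent to W; otherwise it lies
   in exactly one star or top, which contains every clique through X, Y, W.
   Since the embedding preserves distances, a maximal clique of the image
   contains the images of a triangle A, B, D of J(l,m), and as m > 1 and
   l > m + 1 some E is adjacent to A and B but not to D; f E is then a far
   vertex for the triangle f A, f B, f D. *)

From mathcomp Require Import all_boot all_order all_algebra zify.
From Stdlib Require Import Classical FunctionalExtensionality PropExtensionality.
Set Implicit Arguments. Unset Strict Implicit. Unset Printing Implicit Defensive.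
Import GRing.Theory.
Local Open Scope ring_scope.

Definition cons_coef (T : Type) (d : nat) (c0 : T) (c : 'I_d -> T) (i : 'I_d.+1) : T :=
  if unlift ord0 i is Some j then c j else c0.

Lemma cons_coef0 (T : Type) d (c0 : T) (c : 'I_d -> T) : cons_coef c0 c ord0 = c0.
Proof. by rewrite /cons_coef unlift_none. Qed.

Lemma cons_coefS (T : Type) d (c0 : T) (c : 'I_d -> T) j :
  cons_coef c0 c (lift ord0 j) = c j.
Proof. by rewrite /cons_coef liftK. Qed.

Lemma cons_coef_eta (T : Type) d (c : 'I_d.+1 -> T) :
  c = cons_coef (c ord0) (fun j => c (lift ord0 j)).
Proof.
apply: functional_extensionality => i.
by case: (unliftP ord0 i) => [j ->|->]; rewrite ?cons_coefS ?cons_coef0.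
Qed.

Lemma sum_cons_coef (R : unitRingType) (n d : nat) c0 (c : 'I_d -> R) (b : 'I_d.+1 -> 'rV[R]_n) :
  \sum_(i < d.+1) cons_coef c0 c i *: b i = c0 *: b ord0 + \sum_(j < d) c j *: b (lift ord0 j).
Proof. by rewrite big_ord_recl cons_coef0; under eq_bigr do rewrite cons_coefS. Qed.

Section Subspaces.

Variables (R : unitRingType) (n : nat).
Local Notation vset := ('rV[R]_n -> Prop).

Definition incl (X Y : vset) := forall v, X v -> Y v.
Definition inter (X Y : vset) : vset := fun v => X v /\ Y v.
Definition sumv (X Y : vset) : vset := fun w => exists a b, X a /\ Y b /\ w = a + b.
Definition extend (X : vset) (v : 'rV[R]_n) : vset :=
  fun w => exists y c, X y /\ w = y + c *: v.

Definition is_subspace (X : vset) :=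
  X 0 /\ (forall u v, X u -> X v -> X (u + v)) /\ (forall c u, X u -> X (c *: u)).

(* [has_dim d X]: X is obtained from {0} by d successive extensions by a vector
   outside the current space; with a division ring this is is_subspace_dim. *)
Fixpoint has_dim (d : nat) (X : vset) : Prop :=
  match d with
  | 0 => forall v, X v <-> v = 0
  | d'.+1 => exists Y v, has_dim d' Y /\ ~ Y v /\ forall w, X w <-> extend Y v w
  end.

Lemma vset_ext (X Y : vset) : incl X Y -> incl Y X -> X = Y.
Proof.
move=> XY YX; apply: functional_extensionality => v.
by apply: propositional_extensionality; split; [apply: XY | apply: YX].
Qed.

Lemma has_dim_subspace d X : has_dim d X -> is_subspace X.
Proof.
elim: d X => [|d IH] X /=.
  move=> H; split; first by apply/H.
  split; first by move=> u v /H -> /H ->; apply/H; rewrite addr0.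
  by move=> c u /H ->; apply/H; rewrite scaler0.
move=> [Y [v [/IH [Y0 [YD YZ]] [_ HX]]]].
split; first by apply/HX; exists 0, 0; rewrite scale0r addr0.
split.
  move=> u w /HX [y1 [c1 [Hy1 ->]]] /HX [y2 [c2 [Hy2 ->]]]; apply/HX.
  exists (y1 + y2), (c1 + c2); split; first exact: YD.
  by rewrite scalerDl addrACA.
move=> c u /HX [y [c1 [Hy ->]]]; apply/HX.
exists (c *: y), (c * c1); split; first exact: YZ.
by rewrite scalerDr scalerA.
Qed.

Lemma has_dim_ext d X Y : has_dim d X -> (forall v, X v <-> Y v) -> has_dim d Y.
Proof. by move=> HX XY; rewrite -(vset_ext (fun v => proj1 (XY v)) (fun v => proj2 (XY v))). Qed.

Lemma has_dim_extend d X v : has_dim d X -> ~ X v -> has_dim d.+1 (extend X v).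
Proof. by exists X, v. Qed.

Lemma incl_extend X v : incl X (extend X v).
Proof. by move=> w Hw; exists w, 0; rewrite scale0r addr0. Qed.

Lemma extend_mem X v : is_subspace X -> extend X v v.
Proof. by move=> [X0 _]; exists 0, 1; rewrite scale1r add0r. Qed.

Lemma extend_incl X Y v : is_subspace Y -> incl X Y -> Y v -> incl (extend X v) Y.
Proof. by move=> [_ [YD YZ]] XY Yv w [y [c [Hy ->]]]; apply: YD; [apply: XY | apply: YZ]. Qed.

Lemma incl_sumvl X Y : is_subspace Y -> incl X (sumv X Y).
Proof. by move=> [Y0 _] v Xv; exists v, 0; rewrite addr0. Qed.

Lemma incl_sumvr X Y : is_subspace X -> incl Y (sumv X Y).
Proof. by move=> [X0 _] v Yv; exists 0, v; rewrite add0r. Qed.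


Lemma has_dim_span d X : is_subspace_dim d X -> has_dim d X.
Proof.
elim: d X => [|d IH] X [b [free_b HX]] /=.
  move=> v; rewrite HX; split; first by move=> [c ->]; rewrite big_ord0.
  by move=> ->; exists (fun _ => 0); rewrite big_ord0.
exists (fun v => exists c : 'I_d -> R, v = \sum_(j < d) c j *: b (lift ord0 j)), (b ord0).
split.
  apply: IH; exists (fun j => b (lift ord0 j)); split=> // c Hc j.
  have := free_b (cons_coef 0 c); rewrite sum_cons_coef scale0r add0r.
  by move=> /(_ Hc (lift ord0 j)); rewrite cons_coefS.
split.
  move=> [c Hc]; have := free_b (cons_coef (-1) c).
  rewrite sum_cons_coef -Hc scaleN1r addNr => /(_ erefl ord0).
  by rewrite cons_coef0 => /eqP; rewrite oppr_eq0 oner_eq0.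
move=> w; rewrite HX; split.
  move=> [c ->]; exists (\sum_(j < d) c (lift ord0 j) *: b (lift ord0 j)), (c ord0).
  split; first by exists (fun j => c (lift ord0 j)).
  by rewrite big_ord_recl addrC.
by move=> [y [c0 [[c ->] ->]]]; exists (cons_coef c0 c); rewrite sum_cons_coef addrC.
Qed.

Hypothesis hR : division_ring R.

Lemma subspace_scale_cancel P u s c q :
  is_subspace P -> P u -> P s -> u = s + c *: q -> c != 0 -> P q.
Proof.
move=> [_ [PD PZ]] Pu Ps E /hR cU.
have -> : q = c^-1 *: (u + (-1) *: s).
  by rewrite E scaleN1r addrC addKr scalerA mulVr // scale1r.
exact: PZ (PD _ _ Pu (PZ _ _ Ps)).
Qed.

(* Steinitz exchange: eliminating the vector x, a (p+1)-space inside X' + Rx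
   meets X' in a space of dimension at least p. *)
Lemma has_dim_in_extend X' x p Y : is_subspace X' ->
  has_dim p.+1 Y -> incl Y (extend X' x) ->
  exists Z, has_dim p Z /\ incl Z X' /\ incl Z Y.
Proof.
move=> HX'; elim: p Y => [|p IH] Y HY YX.
  have [Y0 _] := has_dim_subspace HY.
  by exists (fun v => v = 0); split=> //; split=> v ->; [case: HX' | ].
have [Y0 [YD YZ]] := has_dim_subspace HY.
move: HY => [Y' [u [HY' [Y'u EY]]]].
have {}HY' : has_dim p.+1 Y' := HY'.
have Y'Y : incl Y' Y by move=> w Hw; apply/EY; apply: incl_extend.
have [Z' [HZ' [Z'X Z'Y]]] := IH Y' HY' (fun w Hw => YX w (Y'Y w Hw)).
have [Y'0 [Y'D Y'Z]] := has_dim_subspace HY'.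
case: (classic (exists y', Y' y' /\ ~ X' y')) => [[y' [Y'y' X'y']] | noY']; last first.
  exists Y'; split=> //; split=> // w Y'w.
  by apply: NNPP => X'w; apply: noY'; exists w.
have [a [c [Xa Ey']]] := YX y' (Y'Y y' Y'y').
have Yu : Y u by apply/EY; apply: extend_mem.
have [b [d [Xb Eu]]] := YX u Yu.
have c0 : c != 0 by apply: contraPneq X'y' => c0; rewrite Ey' c0 scale0r addr0.
set e := d * c^-1; set z := u + (- e) *: y'.
have Ez : z = b + (- e) *: a.
  rewrite /z Eu Ey' scalerDr scalerA mulNr /e -mulrA mulVr ?mulr1; last exact: hR.
  by rewrite !scaleNr addrACA subrr addr0.
have [X0 [XD XZ]] := HX'.
exists (extend Z' z); split.
  apply: has_dim_extend => // Z'z; apply: Y'u.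
  have -> : u = z + e *: y' by rewrite /z -addrA scaleNr addNr addr0.
  by apply: Y'D; [apply: Z'Y | apply: Y'Z].
split; first by apply: extend_incl => //; rewrite Ez; apply: XD => //; apply: XZ.
apply: extend_incl => //; first by move=> w /Z'Y /Y'Y.
by apply: YD => //; apply: YZ; apply: Y'Y.
Qed.

Lemma has_dim_leq d e X Y : has_dim d X -> has_dim e Y -> incl Y X -> (e <= d)%N.
Proof.
elim: d e X Y => [|d IH] [|e] X Y //= HX HY YX.
  move: HY => [Y' [v [HY' [Y'v EY]]]]; exfalso; apply: Y'v.
  have [Y'0 _] := has_dim_subspace HY'.
  suff -> : v = 0 by [].
  by apply/HX/YX/EY/extend_mem/(has_dim_subspace HY').
move: HX => [X' [x [HX' [_ EX]]]].
have [Z [HZ [ZX' _]]] :=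
  has_dim_in_extend (has_dim_subspace HX') HY (fun w Hw => proj1 (EX w) (YX w Hw)).
exact: IH HX' HZ ZX'.
Qed.

Lemma has_dim_lt_not_incl d e X Y : has_dim d X -> has_dim e Y -> (d < e)%N ->
  exists y, Y y /\ ~ X y.
Proof.
move=> HX HY de; apply: NNPP => H.
have YX : incl Y X by move=> y Yy; apply: NNPP => Xy; apply: H; exists y.
by move: (has_dim_leq HX HY YX); rewrite leqNgt de.
Qed.

Lemma has_dim_incl_eq d X Y : has_dim d X -> has_dim d Y -> incl Y X -> incl X Y.
Proof.
move=> HX HY YX v Xv; apply: NNPP => Yv.
have := has_dim_leq HX (has_dim_extend HY Yv) (extend_incl (has_dim_subspace HX) YX Xv).
by rewrite ltnn.
Qed.

Lemma has_dim_neq d X Y : has_dim d X -> has_dim d Y -> X <> Y ->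
  exists y, Y y /\ ~ X y.
Proof.
move=> HX HY XY; apply: NNPP => H; apply: XY.
have YX : incl Y X by move=> v Yv; apply: NNPP => Xv; apply: H; exists v.
exact: vset_ext (has_dim_incl_eq HX HY YX) YX.
Qed.

Lemma span_has_dim d X : has_dim d X -> is_subspace_dim d X.
Proof.
elim: d X => [|d IH] X /=.
  move=> HX; exists (fun _ => 0); split; first by move=> c _ [].
  move=> v; rewrite HX; split; first by move=> ->; exists (fun _ => 0); rewrite big_ord0.
  by move=> [c ->]; rewrite big_ord0.
move=> [Y [v [HY [Yv HX]]]].
have [b [free_b EY]] := IH Y HY.
have sY := has_dim_subspace HY.
exists (cons_coef v b); split.
  move=> c; rewrite [c]cons_coef_eta sum_cons_coef cons_coef0.
  under eq_bigr do rewrite cons_coefS.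
  move=> Hc.
  have c0 : c ord0 = 0.
    case: (eqVneq (c ord0) 0) => // c0; case: Yv.
    apply: (subspace_scale_cancel (u := 0) sY) c0.
    - by case: sY.
    - by apply/EY; exists (fun j => c (lift ord0 j)).
    - by rewrite addrC Hc.
  rewrite c0 scale0r add0r in Hc.
  move=> i; case: (unliftP ord0 i) => [j ->|->]; rewrite ?cons_coefS ?cons_coef0 //.
  exact: free_b Hc j.
move=> w; rewrite HX; split.
  move=> [y [c0 [/EY [c ->] ->]]]; exists (cons_coef c0 c).
  by rewrite sum_cons_coef cons_coef0 addrC; under [in RHS]eq_bigr do rewrite cons_coefS.
move=> [c ->]; exists (\sum_(j < d) c (lift ord0 j) *: b j), (c ord0); split.
  by apply/EY; exists (fun j => c (lift ord0 j)).
by rewrite big_ord_recl addrC cons_coef0; under eq_bigr do rewrite cons_coefS.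
Qed.

Lemma is_subspace_dimP d X : is_subspace_dim d X <-> has_dim d X.
Proof. by split; [apply: has_dim_span | apply: span_has_dim]. Qed.

End Subspaces.

Section GrassmannCliques.

Variables (R : unitRingType) (n k : nat).
Hypothesis hR : division_ring R.
Hypothesis k_gt0 : (0 < k)%N.
Local Notation vset := ('rV[R]_n -> Prop).

Definition gadj (X Y : vset) := has_dim k X /\ has_dim k Y /\ has_dim k.-1 (inter X Y).

Lemma grass_vertexE : @grass_vertex R n k = has_dim k.
Proof.
apply: functional_extensionality => X.
exact: propositional_extensionality (is_subspace_dimP hR k X).
Qed.

Lemma grass_adjE : @grass_adj R n k = gadj.
Proof.
apply: functional_extensionality => X; apply: functional_extensionality => Y.
apply: propositional_extensionality.
by rewrite /grass_adj /gadj grass_vertexE (is_subspace_dimP hR).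
Qed.

Lemma gadj_sym X Y : gadj X Y -> gadj Y X.
Proof.
move=> [HX [HY HXY]]; split=> //; split=> //.
by apply: (has_dim_ext HXY) => v; rewrite /inter; tauto.
Qed.

Lemma gadj_neq X Y : gadj X Y -> X <> Y.
Proof.
move=> [HX [_ HXY]] XY; subst Y.
by have := has_dim_leq hR HXY HX (fun v Xv => conj Xv Xv); rewrite leqNgt ltn_predL k_gt0.
Qed.

Lemma has_dim_sumv X Y : gadj X Y -> has_dim k.+1 (sumv X Y).
Proof.
move=> [HX [HY HXY]].
have kk : (k.-1 < k)%N by rewrite ltn_predL.
have [y [Yy Iy]] := has_dim_lt_not_incl hR HXY HY kk.
have Xy : ~ X y by move=> Xy; apply: Iy.
have HIy : has_dim k (extend (inter X Y) y) by rewrite -(prednK k_gt0); apply: has_dim_extend.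
have [_ [_ YZ]] := has_dim_subspace HY.
have IyY : incl (extend (inter X Y) y) Y.
  by apply: extend_incl => //; [apply: has_dim_subspace HY | move=> v []].
have YIy := has_dim_incl_eq hR HY HIy IyY.
have [_ [XD _]] := has_dim_subspace HX.
apply: (has_dim_ext (has_dim_extend HX Xy)) => w; split.
  by move=> [x [c [Xx ->]]]; exists x, (c *: y); split=> //; split=> //; apply: YZ.
move=> [a [b [Xa [/YIy [s [c [[Xs _] ->]]] ->]]]].
by exists (a + s), c; split; [apply: XD | rewrite addrA].
Qed.

Lemma gadj_star S P Q : has_dim k.-1 S -> has_dim k P -> has_dim k Q ->
  incl S P -> incl S Q -> P <> Q -> gadj P Q.
Proof.
move=> HS HP HQ SP SQ PQ; split=> //; split=> //.
have [q [Qq Pq]] := has_dim_neq hR HP HQ PQ.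
have Sq : ~ S q by move=> /SP.
have HSq : has_dim k (extend S q) by rewrite -(prednK k_gt0); apply: has_dim_extend.
have SqQ : incl (extend S q) Q by apply: extend_incl => //; apply: has_dim_subspace HQ.
have QSq := has_dim_incl_eq hR HQ HSq SqQ.
apply: (has_dim_ext HS) => v; split=> [Sv | [Pv /QSq [s [c [Ss E]]]]].
  by split; [apply: SP | apply: SQ].
case: (eqVneq c 0) => [c0 | c0]; first by rewrite E c0 scale0r addr0.
by case: Pq; apply: (subspace_scale_cancel hR (has_dim_subspace HP) Pv (SP s Ss) E c0).
Qed.

Lemma gadj_top T P Q : has_dim k.+1 T -> has_dim k P -> has_dim k Q ->
  incl P T -> incl Q T -> P <> Q -> gadj P Q.
Proof.
move=> HT HP HQ PT QT PQ; split=> //; split=> //.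
have [q [Qq Pq]] := has_dim_neq hR HP HQ PQ.
have PqT : incl (extend P q) T by apply: extend_incl (QT q Qq); first exact: has_dim_subspace HT.
have TPq := has_dim_incl_eq hR HT (has_dim_extend HP Pq) PqT.
have HQ' : has_dim k.-1.+1 Q by rewrite prednK.
have [Z [HZ [ZP ZQ]]] :=
  has_dim_in_extend hR (has_dim_subspace HP) HQ' (fun w Qw => TPq w (QT w Qw)).
apply: (has_dim_ext HZ) => v; split=> [Zv | [Pv Qv]]; first by split; [apply: ZP | apply: ZQ].
apply: NNPP => Zv.
have HZv : has_dim k (extend Z v) by rewrite -(prednK k_gt0); apply: has_dim_extend.
have ZvP : incl (extend Z v) P by apply: extend_incl => //; apply: has_dim_subspace HP.
have ZvQ : incl (extend Z v) Q by apply: extend_incl => //; apply: has_dim_subspace HQ.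
have PZv := has_dim_incl_eq hR HP HZv ZvP.
have PQincl : incl P Q by move=> w /PZv /ZvQ.
by apply: PQ; apply: vset_ext PQincl (has_dim_incl_eq hR HQ HP PQincl).
Qed.

Lemma gadj_triangle_incl_sumv X Y Z :
  gadj X Y -> gadj X Z -> gadj Y Z -> ~ incl (inter X Y) Z -> incl Z (sumv X Y).
Proof.
move=> [HX [HY HXY]] [_ [HZ HXZ]] [_ [_ HYZ]] XYZ.
have [v [[Yv Zv] XZv]] : exists v, inter Y Z v /\ ~ inter X Z v.
  apply: NNPP => H; apply: XYZ.
  have YZ_XY : incl (inter Y Z) (inter X Y).
    move=> w [Yw Zw]; split=> //; apply: NNPP => Xw; apply: H; exists w.
    by split=> // -[].
  by move=> w /(has_dim_incl_eq hR HXY HYZ YZ_XY) [].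
have Xv : ~ X v by move=> Xv; apply: XZv.
have HZv : has_dim k (extend (inter X Z) v) by rewrite -(prednK k_gt0); apply: has_dim_extend.
have ZvZ : incl (extend (inter X Z) v) Z.
  by apply: extend_incl => //; [apply: has_dim_subspace HZ | move=> w []].
have [_ [_ YZ]] := has_dim_subspace HY.
move=> w /(has_dim_incl_eq hR HZ HZv ZvZ) [s [c [[Xs _] ->]]].
by exists s, (c *: v); split=> //; split=> //; apply: YZ.
Qed.

(* Z2 lies in both X + Y and X + Z1, which meet in X; hence Z2 = X. *)
Lemma no_star_top_triangle X Y Z1 Z2 :
  gadj X Y -> incl (inter X Y) Z1 -> ~ incl Z1 (sumv X Y) ->
  incl Z2 (sumv X Y) -> ~ incl (inter X Y) Z2 ->
  gadj X Z1 -> gadj X Z2 -> gadj Z1 Z2 -> False.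
Proof.
move=> AXY XYZ1 Z1XY Z2XY XYZ2 AX1 AX2 A12.
have N1 : ~ incl (inter X Z1) Z2.
  by move=> H; apply: XYZ2 => v [Xv Yv]; apply: H; split=> //; apply: XYZ1.
have Z2XZ1 := gadj_triangle_incl_sumv AX1 AX2 A12 N1.
have [HX [HY _]] := AXY; have [_ [HZ1 _]] := AX1; have [_ [HZ2 _]] := AX2.
have Z2X : incl Z2 X.
  move=> w Z2w; apply: NNPP => Xw.
  have XwZ1 : incl (extend X w) (sumv X Z1).
    apply: extend_incl (Z2XZ1 w Z2w); first exact: has_dim_subspace (has_dim_sumv AX1).
    exact: incl_sumvl (has_dim_subspace HZ1).
  have XwY : incl (extend X w) (sumv X Y).
    apply: extend_incl (Z2XY w Z2w); first exact: has_dim_subspace (has_dim_sumv AXY).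
    exact: incl_sumvl (has_dim_subspace HY).
  apply: Z1XY => v Z1v; apply: XwY.
  apply: (has_dim_incl_eq hR (has_dim_sumv AX1) (has_dim_extend HX Xw) XwZ1).
  by exists 0, v; case: (has_dim_subspace HX) => X0 _; rewrite add0r.
by apply: XYZ2 => v [Xv _]; apply: (has_dim_incl_eq hR HX HZ2 Z2X).
Qed.

End GrassmannCliques.

Arguments grass_vertexE {R n k} hR.
Arguments grass_adjE {R n k} hR.

Section GrassmannMaximalCliques.

Variables (R : unitRingType) (n k : nat).
Hypothesis hR : division_ring R.
Hypothesis k_gt0 : (0 < k)%N.
Local Notation vset := ('rV[R]_n -> Prop).
Local Notation gadj := (@gadj R n k).
Local Notation clique := (is_clique (@has_dim R n k) gadj).

Definition star (S : vset) : vset -> Prop := fun Z => has_dim k Z /\ incl S Z.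
Definition top (T : vset) : vset -> Prop := fun Z => has_dim k Z /\ incl Z T.

Lemma star_clique S : has_dim k.-1 S -> clique (star S).
Proof.
move=> HS; split=> [Z [] // | Z1 Z2 [HZ1 SZ1] [HZ2 SZ2]].
exact: gadj_star HS HZ1 HZ2 SZ1 SZ2.
Qed.

Lemma top_clique T : has_dim k.+1 T -> clique (top T).
Proof.
move=> HT; split=> [Z [] // | Z1 Z2 [HZ1 Z1T] [HZ2 Z2T]].
exact: gadj_top HT HZ1 HZ2 Z1T Z2T.
Qed.

Lemma triangle_incl_star X Y W D :
  gadj X Y -> gadj X W -> incl (inter X Y) W -> ~ incl W (sumv X Y) ->
  clique D -> D X -> D Y -> D W -> forall Z, D Z -> star (inter X Y) Z.
Proof.
move=> AXY AXW XYW WXY cD DX DY DW Z DZ; split; first by case: cD => /(_ Z DZ).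
apply: NNPP => XYZ.
have ne V : incl (inter X Y) V -> Z <> V by move=> XYV ZV; apply: XYZ; rewrite ZV.
have AXZ := cD.2 _ _ DX DZ (nesym (ne X (fun v => @proj1 _ _))).
have AYZ := cD.2 _ _ DY DZ (nesym (ne Y (fun v => @proj2 _ _))).
have AWZ := cD.2 _ _ DW DZ (nesym (ne W XYW)).
have ZXY := gadj_triangle_incl_sumv hR k_gt0 AXY AXZ AYZ XYZ.
exact: (no_star_top_triangle hR k_gt0 AXY XYW WXY ZXY XYZ AXW AXZ AWZ).
Qed.

Lemma triangle_incl_top X Y W D :
  gadj X Y -> gadj X W -> gadj Y W -> ~ incl (inter X Y) W ->
  clique D -> D X -> D Y -> D W -> forall Z, D Z -> top (sumv X Y) Z.
Proof.
move=> AXY AXW AYW XYW cD DX DY DW Z DZ; split; first by case: cD => /(_ Z DZ).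
have WXY := gadj_triangle_incl_sumv hR k_gt0 AXY AXW AYW XYW.
apply: NNPP => ZXY.
have [HX [HY _]] := AXY.
have ne V : incl V (sumv X Y) -> Z <> V by move=> VXY ZV; apply: ZXY; rewrite ZV.
have AXZ := cD.2 _ _ DX DZ (nesym (ne X (incl_sumvl (has_dim_subspace HY)))).
have AYZ := cD.2 _ _ DY DZ (nesym (ne Y (incl_sumvr (has_dim_subspace HX)))).
have AZW := cD.2 _ _ DZ DW (ne W WXY).
have XYZ : incl (inter X Y) Z.
  by apply: NNPP => XYZ; apply: ZXY; apply: gadj_triangle_incl_sumv AXY AXZ AYZ XYZ.
exact: (no_star_top_triangle hR k_gt0 AXY XYZ ZXY WXY XYW AXZ AXW AZW).
Qed.

Lemma far_vertex_separates X Y W E :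
  gadj X Y -> gadj E X -> gadj E Y -> has_dim k W -> W <> E -> ~ gadj E W ->
  incl (inter X Y) W -> ~ incl W (sumv X Y).
Proof.
move=> AXY AEX AEY HW WE EW XYW WXY; apply: EW.
have [HX [HY HXY]] := AXY; have [HE _] := AEX.
case: (classic (incl (inter X Y) E)) => XYE.
  exact: gadj_star HXY HE HW XYE XYW (nesym WE).
have EXY := gadj_triangle_incl_sumv hR k_gt0 AXY (gadj_sym AEX) (gadj_sym AEY) XYE.
exact: gadj_top (has_dim_sumv hR k_gt0 AXY) HE HW EXY WXY (nesym WE).
Qed.

Lemma greatest_clique_through_triangle X Y W E :
  gadj X Y -> gadj X W -> gadj Y W -> gadj E X -> gadj E Y -> W <> E -> ~ gadj E W ->
  exists M, clique M /\
    forall D, clique D -> D X -> D Y -> D W -> forall Z, D Z -> M Z.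
Proof.
move=> AXY AXW AYW AEX AEY WE EW.
have [_ [HW _]] := AXW.
case: (classic (incl (inter X Y) W)) => XYW.
  exists (star (inter X Y)); split; first by apply: star_clique; case: AXY => _ [].
  have WXY := far_vertex_separates AXY AEX AEY HW WE EW XYW.
  by move=> D cD DX DY DW Z DZ; apply: (triangle_incl_star AXY AXW XYW WXY cD DX DY DW).
exists (top (sumv X Y)); split; first exact: top_clique (has_dim_sumv hR k_gt0 AXY).
by move=> D cD DX DY DW Z DZ; apply: (triangle_incl_top AXY AXW AYW XYW cD DX DY DW).
Qed.

Lemma grass_adj_sym (X Y : vset) : grass_adj k X Y -> grass_adj k Y X.
Proof. by rewrite (grass_adjE hR); apply: gadj_sym. Qed.

Lemma grass_adj_neq (X Y : vset) : grass_adj k X Y -> X <> Y.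
Proof. by rewrite (grass_adjE hR); apply: gadj_neq. Qed.

Lemma grass_greatest_clique_through_triangle X Y W E :
  grass_adj k X Y -> grass_adj k X W -> grass_adj k Y W ->
  grass_adj k E X -> grass_adj k E Y -> W <> E -> ~ grass_adj k E W ->
  exists M, is_clique (@grass_vertex R n k) (@grass_adj R n k) M /\
    forall D, is_clique (@grass_vertex R n k) (@grass_adj R n k) D -> D X -> D Y -> D W ->
      forall Z, D Z -> M Z.
Proof. rewrite (grass_vertexE hR) (grass_adjE hR); exact: greatest_clique_through_triangle. Qed.

End GrassmannMaximalCliques.

Section JohnsonGraph.

Variables l m : nat.
Local Notation jadj := (@johnson_adj l m).
Implicit Types A B D E : {set 'I_l}.

Lemma exists_notin (A : {set 'I_l}) : (#|A| < l)%N -> exists x, x \notin A.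
Proof.
move=> Al; have := cardsC A; rewrite card_ord => CA.
have /card_gt0P [x] : (0 < #|~: A|)%N by lia.
by rewrite inE; exists x.
Qed.

Lemma exists_set_card j : (j <= l)%N -> exists A : {set 'I_l}, #|A| = j.
Proof.
elim: j => [|j IH] jl; first by exists set0; rewrite cards0.
have [A HA] := IH (ltnW jl).
have [x Ax] := exists_notin (A := A) (ltac:(lia)).
by exists (x |: A); rewrite cardsU1 Ax HA.
Qed.

Lemma johnson_adj_sym A B : jadj A B -> jadj B A.
Proof. by move=> [HA [HB HAB]]; split=> //; split=> //; rewrite setIC. Qed.

Lemma johnson_adj_neq A B : (0 < m)%N -> jadj A B -> A <> B.
Proof. by move=> m_gt0 [HA [_ HAB]] E; subst; rewrite setIid HA in HAB; lia. Qed.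

Lemma setIU1_notin (x : 'I_l) (A B : {set 'I_l}) : x \notin A -> A :&: (x |: B) = A :&: B.
Proof.
move=> xA; apply/setP => y; rewrite !inE.
by case: (eqVneq y x) => [->|]; rewrite ?(negbTE xA).
Qed.

Lemma johnson_adj_exists A : (0 < m)%N -> (m < l)%N -> #|A| = m -> exists B, jadj A B.
Proof.
move=> m_gt0 ml HA.
have [s As] : exists s, s \in A by apply/card_gt0P; rewrite HA.
have [x Ax] := exists_notin (A := A) (ltac:(lia)).
have HAs := cardsD1 s A; rewrite As HA in HAs.
have xAs : x \notin A :\ s by rewrite inE negb_and Ax orbT.
exists (x |: (A :\ s)); split=> //; split; first by rewrite /johnson_vertex cardsU1 xAs; lia.
by rewrite setIU1_notin // setIC (setIidPl (subsetDl A [set s])); lia.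
Qed.

Lemma johnson_adj_common_nbr A B : (0 < m)%N -> (m.+2 <= l)%N -> jadj A B ->
  exists D, jadj D A /\ jadj D B.
Proof.
move=> m_gt0 ml [HA [HB HAB]].
have HU := cardsUI A B; rewrite HA HB HAB in HU.
have [c cAB] := exists_notin (A := A :|: B) (ltac:(lia)).
move: (cAB); rewrite inE negb_or => /andP [cA cB].
have cI : c \notin A :&: B by rewrite inE (negbTE cA).
have HD : #|c |: (A :&: B)| = m by rewrite cardsU1 cI HAB; lia.
exists (c |: (A :&: B)); split; split=> //; split=> //; rewrite setIC setIU1_notin //.
  by rewrite setIA setIid.
by rewrite setIC -setIA setIid.
Qed.

Lemma johnson_far_nbr_star A B D : (1 < m)%N ->
  jadj A B -> jadj A D -> jadj B D -> A :&: B \subset D ->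
  exists E, jadj E A /\ jadj E B /\ (#|E :&: D| < m.-1)%N.
Proof.
move=> m_gt1 [HA [HB HAB]] [_ [HD HAD]] [_ [_ HBD]] ABD.
have DA : D :&: A = A :&: B.
  by apply/esym/eqP; rewrite eqEcard subsetI ABD subsetIl /= (setIC D A) HAD HAB.
have DB : D :&: B = A :&: B.
  by apply/esym/eqP; rewrite eqEcard subsetI ABD subsetIr /= (setIC D B) HBD HAB.
have [s ABs] : exists s, s \in A :&: B by apply/card_gt0P; rewrite HAB; lia.
move: (ABs); rewrite inE => /andP [As Bs].
have HU := cardsUI A B; rewrite HA HB HAB in HU.
have c1 := cardsD1 s (A :|: B); rewrite inE As in c1.
have c2 := cardsD1 s A; rewrite As HA in c2.
have c3 := cardsD1 s B; rewrite Bs HB in c3.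
have c4 := cardsD1 s (A :&: B); rewrite ABs HAB in c4.
have EV : johnson_vertex m ((A :|: B) :\ s) by rewrite /johnson_vertex; lia.
exists ((A :|: B) :\ s); split; [|split].
- by split=> //; split=> //; rewrite setIDAC setIUl setIid (setUidPl (subsetIr B A)); lia.
- by split=> //; split=> //; rewrite setIDAC setIUl setIid (setUidPr (subsetIr A B)); lia.
- by rewrite setIDAC setIUl (setIC A) (setIC B) DA DB setUid; lia.
Qed.

Lemma johnson_far_nbr_top A B D : (0 < m)%N -> (m.+2 <= l)%N ->
  jadj A B -> jadj A D -> jadj B D -> ~~ (A :&: B \subset D) ->
  exists E, jadj E A /\ jadj E B /\ (#|E :&: D| < m.-1)%N.
Proof.
move=> m_gt0 ml [HA [HB HAB]] [_ [HD HAD]] [_ [_ HBD]] ABD.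
have HU := cardsUI A B; rewrite HA HB HAB in HU.
have [x xAB] := exists_notin (A := A :|: B) (ltac:(lia)).
move: (xAB); rewrite inE negb_or => /andP [xA xB].
have DAB : D :&: A :&: (D :&: B) \proper A :&: B.
  rewrite properE -setIIr subsetIr /=; apply: contra ABD => /subsetP ABD'.
  by apply/subsetP => y /ABD'; rewrite inE => /andP [].
have xD : x \notin D.
  apply: contra xAB => xD.
  have DADB : (D :&: A) :|: (D :&: B) = D.
    apply/eqP; rewrite eqEcard subUset !subsetIl /=.
    have := cardsUI (D :&: A) (D :&: B); have := proper_card DAB.
    rewrite (setIC D A) (setIC D B) HAD HBD HD HAB -subn1.
    by set a := #|_ :&: _ :&: _|; set u := #|_ :|: _|; lia.
  by move: xD; rewrite -DADB -setIUr inE => /andP [].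
have xI : x \notin A :&: B by rewrite inE (negbTE xA).
have EV : johnson_vertex m (x |: A :&: B) by rewrite /johnson_vertex cardsU1 xI HAB -subn1; lia.
exists (x |: A :&: B); split; [|split].
- by split=> //; split=> //; rewrite setIC setIU1_notin // setIA setIid.
- by split=> //; split=> //; rewrite setIC setIU1_notin // setIC -setIA setIid.
- rewrite setIC setIU1_notin // -HAB; apply: proper_card.
  by rewrite (setIC D A) (setIC D B) setIACA setIid in DAB; rewrite setIC.
Qed.

Lemma johnson_far_nbr A B D : (1 < m)%N -> (m.+2 <= l)%N ->
  jadj A B -> jadj A D -> jadj B D ->
  exists E, jadj E A /\ jadj E B /\ (#|E :&: D| < m.-1)%N.
Proof.
move=> m_gt1 ml AB AD BD; case: (boolP (A :&: B \subset D)) => ABD.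
  exact: johnson_far_nbr_star.
by apply: johnson_far_nbr_top => //; lia.
Qed.

End JohnsonGraph.

Section MaximalCliques.

Variables (T : Type) (P : T -> Prop) (adj : T -> T -> Prop).
Hypothesis adj_sym : forall x y, adj x y -> adj y x.
Variable C : T -> Prop.
Hypothesis C_max : is_maximal_clique P adj C.

Lemma maximal_clique_mem z : P z -> (forall x, C x -> x <> z -> adj x z) -> C z.
Proof.
move=> Pz Cz; have [[CP C_adj] C_maxl] := C_max.
apply: (C_maxl (fun x => C x \/ x = z)); [split | by left | by right].
  by move=> x [/CP | ->].
move=> x y [Cx | ->] [Cy | ->] xy //; first exact: C_adj.
  exact: Cz.
by apply: adj_sym; apply: Cz => // yz; apply: xy.
Qed.

Lemma maximal_clique_exists z : P z -> exists x, C x.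
Proof.
move=> Pz; apply: NNPP => noC; apply: (noC); exists z.
by apply: maximal_clique_mem => // x Cx; case: noC; exists x.
Qed.

Lemma maximal_clique_exists_other x y : C x -> P y -> adj x y -> y <> x ->
  exists w, C w /\ w <> x.
Proof.
move=> Cx Py xy yx; apply: NNPP => only_x; apply: yx.
have eq_x w : C w -> w = x by move=> Cw; apply: NNPP => wx; apply: only_x; exists w.
by apply: (eq_x); apply: maximal_clique_mem => // w /eq_x ->.
Qed.

Lemma maximal_clique_exists_third x y z : C x -> C y -> P z ->
  adj x z -> adj y z -> z <> x -> z <> y -> exists w, C w /\ w <> x /\ w <> y.
Proof.
move=> Cx Cy Pz xz yz zx zy; apply: NNPP => only_xy.
have eq_xy w : C w -> w = x \/ w = y.
  move=> Cw; apply: NNPP => wxy; apply: only_xy; exists w.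
  by split=> //; split=> E; apply: wxy; [left | right].
have Cz : C z by apply: maximal_clique_mem => // w /eq_xy [] ->.
by case/eq_xy: Cz.
Qed.

End MaximalCliques.

Lemma greatest_clique_unique_maximal (T : Type) (P : T -> Prop) (adj : T -> T -> Prop)
    (C M : T -> Prop) :
  is_clique P adj C -> is_clique P adj M ->
  (forall D, is_clique P adj D -> (forall x, C x -> D x) -> forall x, D x -> M x) ->
  [/\ is_maximal_clique P adj M, (forall x, C x -> M x) &
      forall M', is_maximal_clique P adj M' -> (forall x, C x -> M' x) ->
        forall x, M' x <-> M x].
Proof.
move=> C_clique M_clique M_greatest.
have CM : forall x, C x -> M x by apply: M_greatest.
split=> //; first by split=> // D D_clique MD; apply: M_greatest => // x /CM /MD.
move=> M' [M'_clique M'_max] CM' x; split; first exact: M_greatest.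
by apply: (M'_max M M_clique); apply: M_greatest.
Qed.

Lemma gdist1P (T : Type) (adj : T -> T -> Prop) x y : gdist adj x y 1 <-> adj x y /\ x <> y.
Proof.
split=> [[[z [xz /= <-]] min] | [xy yx]].
  by split=> // xy; move: (min 0%N); rewrite xy => /(_ erefl).
by split; [exists y | case].
Qed.

Section IsometricEmbedding.

Variables (R : unitRingType) (n k l m : nat) (f : {set 'I_l} -> ('rV[R]_n -> Prop)).
Hypothesis hR : division_ring R.
Hypothesis k_gt0 : (0 < k)%N.
Hypothesis m_gt0 : (0 < m)%N.
Hypothesis hf : isometric_embedding k m f.

Definition embedding_image (X : 'rV[R]_n -> Prop) := exists A, johnson_vertex m A /\ f A = X.

Lemma embedding_adjE A B : johnson_vertex m A -> johnson_vertex m B ->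
  grass_adj k (f A) (f B) <-> johnson_adj m A B.
Proof.
have [_ [_ f_iso]] := hf; move=> HA HB; have := f_iso A B 1%N HA HB.
rewrite !gdist1P => iso1; split=> [AB | AB].
  by case: (proj2 iso1 (conj AB (grass_adj_neq hR k_gt0 AB))).
by case: (proj1 iso1 (conj AB (johnson_adj_neq m_gt0 AB))).
Qed.

Lemma embedding_image_triangle C : (m.+2 <= l)%N ->
  is_maximal_clique embedding_image (@grass_adj R n k) C ->
  exists A B D, [/\ C (f A), C (f B) & C (f D)] /\
    [/\ johnson_adj m A B, johnson_adj m A D & johnson_adj m B D].
Proof.
move=> ml C_max; have [[CJ C_adj] _] := C_max.
have mem_adj A B : C (f A) -> C (f B) -> johnson_vertex m A -> johnson_vertex m B ->
    f A <> f B -> johnson_adj m A B.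
  by move=> CA CB HA HB AB; apply/embedding_adjE => //; apply: C_adj.
have [A0 HA0] := exists_set_card (ltnW (ltnW ml)).
have [X CX] := maximal_clique_exists (grass_adj_sym hR) C_max (ex_intro _ A0 (conj HA0 erefl)).
have [A [HA fA]] := CJ X CX; subst X.
have [B' AB'] := johnson_adj_exists m_gt0 (ltnW ml) HA.
have [_ [HB' _]] := AB'.
have [Y [CY YA]] := maximal_clique_exists_other (grass_adj_sym hR) C_max CX
  (ex_intro _ B' (conj HB' erefl)) (proj2 (embedding_adjE HA HB') AB')
  (nesym (grass_adj_neq hR k_gt0 (proj2 (embedding_adjE HA HB') AB'))).
have [B [HB fB]] := CJ Y CY; subst Y.
have AB := mem_adj A B CX CY HA HB (nesym YA).
have [D' [D'A D'B]] := johnson_adj_common_nbr m_gt0 ml AB.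
have [HD' _] := D'A.
have fAD' := proj2 (embedding_adjE HA HD') (johnson_adj_sym D'A).
have fBD' := proj2 (embedding_adjE HB HD') (johnson_adj_sym D'B).
have [W [CW [WA WB]]] := maximal_clique_exists_third (grass_adj_sym hR) C_max CX CY
  (ex_intro _ D' (conj HD' erefl)) fAD' fBD'
  (nesym (grass_adj_neq hR k_gt0 fAD')) (nesym (grass_adj_neq hR k_gt0 fBD')).
have [D [HD fD]] := CJ W CW; subst W.
exists A, B, D; split; split=> //; apply: mem_adj => //; exact: nesym.
Qed.

End IsometricEmbedding.

Theorem lemma1 (R : unitRingType) (n k l m : nat)
  (hR : division_ring R)
  (hn : (4 <= n)%N) (hl : (4 <= l)%N)
  (hk1 : (1 < k)%N) (hk2 : (k < n - 1)%N)
  (hm1 : (1 < m)%N) (hm2 : (m < l - 1)%N)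
  (hmin : (minn m (l - m) <= minn k (n - k))%N)
  (f : {set 'I_l} -> ('rV[R]_n -> Prop))
  (hf : isometric_embedding k m f) :
  let J := fun X : 'rV[R]_n -> Prop => exists A, johnson_vertex m A /\ f A = X in
  forall C : ('rV[R]_n -> Prop) -> Prop,
    is_maximal_clique J (@grass_adj R n k) C ->
    exists M : ('rV[R]_n -> Prop) -> Prop,
      is_maximal_clique (@grass_vertex R n k) (@grass_adj R n k) M /\
      (forall X, C X -> M X) /\
      forall M' : ('rV[R]_n -> Prop) -> Prop,
        is_maximal_clique (@grass_vertex R n k) (@grass_adj R n k) M' ->
        (forall X, C X -> M' X) -> forall X, M' X <-> M X.
Proof.
move=> J C C_max.
have k_gt0 : (0 < k)%N by lia.
have m_gt0 : (0 < m)%N by lia.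
have ml : (m.+2 <= l)%N by lia.
have adjE := embedding_adjE hR k_gt0 m_gt0 hf.
have [A [B [D [[CA CB CD] [AB AD BD]]]]] := embedding_image_triangle hR k_gt0 m_gt0 hf ml C_max.
have [E [EA [EB ED]]] := johnson_far_nbr hm1 ml AB AD BD.
have [[HE [HA _]] [[_ [HB _]] [_ [HD _]]]] := (EA, (EB, AD)).
have DE : f D <> f E.
  by move=> /(proj1 (proj2 hf) D E HD HE) DE; rewrite -DE setIid HD in ED; lia.
have not_ED : ~ grass_adj k (f E) (f D).
  by move=> /(adjE _ _ HE HD) [_ [_ EDm]]; rewrite EDm in ED; lia.
have [M [M_clique M_greatest]] := grass_greatest_clique_through_triangle hR k_gt0
  (proj2 (adjE _ _ HA HB) AB) (proj2 (adjE _ _ HA HD) AD) (proj2 (adjE _ _ HB HD) BD)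
  (proj2 (adjE _ _ HE HA) EA) (proj2 (adjE _ _ HE HB) EB) DE not_ED.
have [[CJ C_adj] _] := C_max.
have C_clique : is_clique (@grass_vertex R n k) (@grass_adj R n k) C.
  by split=> // X /CJ [A' [HA' <-]]; apply: (proj1 hf).
have [M_max CM M_uniq] := greatest_clique_unique_maximal C_clique M_clique
  (fun D' cD' CD' => M_greatest D' cD' (CD' _ CA) (CD' _ CB) (CD' _ CD)).
by exists M.
Qed.
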